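(* Consider the system $$\dot v=(-\mu_1-p_{11}v^2+p_{12}A^2)v-M_2 s,\quad \dot A=(-\mu_2-p_{21}v^2+p_{22}A^2)A+M_3 s,\quad \dot s=2\alpha(v+M_1 s)s,$$ under the standing assumptions of the context, and fix $\mu_2=\mu_2^0>0$. If $\mu_1<0$ is taken sufficiently close to $0$, then ''the solution'' satisfies $s(t)=O(|\mu_1|)$ for all $t>0$.
   Context: Standing assumptions: $\alpha>0$, $M_1\in\mathbb R$, $M_2>0$, $M_3>0$, $p_{11},p_{12},p_{21},p_{22}>0$, $p_{12}p_{21}<p_{11}p_{22}$. (The paper's further hypotheses on the underlying PDE impose no condition on this ODE.) For $\mu_1<0$ let $v_{\rm ep2}=\sqrt{-\mu_1/p_{11}}$ and $\widetilde{\mathrm{EP}}_2^\pm=(\pm v_{\rm ep2},0,0)$ in $(v,A,s)$-coordinates; $\widetilde{\mathrm{EP}}_2^+$ has the positive eigenvalue $2\alpha v_{\rm ep2}$, and ''the solution'' is the trajectory emanating from $\widetilde{\mathrm{EP}}_2^+$ at $t=-\infty$ along this unstable direction into $s>0$. $O(|\mu_1|)$ means bounded by a constant times $|\mu_1|$ as $\mu_1\to0$. *)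

From Stdlib Require Import Reals.
From Coquelicot Require Import Coquelicot.
Open Scope R_scope.

Definition rhs_v (mu1 p11 p12 M2 : R) (v A s : R) : R :=
  (- mu1 - p11 * v ^ 2 + p12 * A ^ 2) * v - M2 * s.
Definition rhs_A (mu2 p21 p22 M3 : R) (v A s : R) : R :=
  (- mu2 - p21 * v ^ 2 + p22 * A ^ 2) * A + M3 * s.
Definition rhs_s (alpha M1 : R) (v s : R) : R :=
  2 * alpha * (v + M1 * s) * s.

Definition v_ep2 (mu1 p11 : R) : R := sqrt (- mu1 / p11).

(* (v, A, s), defined on (-oo, T) (T possibly +oo), is a solution of the
   system which emanates from EP2~^+ = (v_ep2, 0, 0) at t = -oo and lies in
   s > 0, i.e. it is the branch of the (one-dimensional) unstable manifold of
   EP2~^+ entering s > 0: "the solution". *)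
Definition unstable_branch_solution
    (alpha M1 M2 M3 p11 p12 p21 p22 mu1 mu2 : R)
    (T : Rbar) (v A s : R -> R) : Prop :=
  (forall t : R, Rbar_lt t T ->
      is_derive v t (rhs_v mu1 p11 p12 M2 (v t) (A t) (s t)) /\
      is_derive A t (rhs_A mu2 p21 p22 M3 (v t) (A t) (s t)) /\
      is_derive s t (rhs_s alpha M1 (v t) (s t))) /\
  is_lim v m_infty (v_ep2 mu1 p11) /\
  is_lim A m_infty 0 /\
  is_lim s m_infty 0 /\
  (forall t : R, Rbar_lt t T -> 0 < s t).

(* With m = -mu1, let psi = v^2 + (M2/alpha) s + tilt m v.  For m small, the region
   {psi < psi_level m, A^2 < A_level m} contains EP2~^+ = (sqrt (m/p11), 0, 0), hence
   the solution at all sufficiently negative times, and it is forward invariant: on each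
   piece of its boundary the defining function strictly decreases along the flow.  On
   the region s <= s_slope m.  The tilt term is what makes psi decrease: it contributes
   the damping -tilt m M2 s, which dominates the term 2 M1 M2 s^2 of indefinite sign. *)

From Stdlib Require Import Reals Lra Psatz Classical.
From Coquelicot Require Import Coquelicot.
Open Scope R_scope.

Lemma real_induction (P : R -> Prop) (a b : R) :
  a <= b ->
  (forall x, a <= x <= b -> (forall y, a <= y < x -> P y) -> P x) ->
  (forall x, a <= x < b -> P x -> exists e, 0 < e /\ forall y, x < y < x + e -> P y) ->
  forall x, a <= x <= b -> P x.
Proof.
  intros Hab Hclose Hstep.
  set (E := fun x => a <= x <= b /\ forall y, a <= y < x -> P y).
  assert (HaE : E a) by (split; [lra | intros y Hy; lra]).
  destruct (completeness E) as [xs [Hub Hlub]].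
  { exists b. intros x Hx. apply Hx. }
  { exists a. exact HaE. }
  assert (Haxs : a <= xs) by now apply Hub.
  assert (Hxsb : xs <= b) by (apply Hlub; intros x Hx; apply Hx).
  assert (Hbelow : forall y, a <= y < xs -> P y).
  { intros y Hy. destruct (classic (P y)) as [HP | HnP]; [exact HP |].
    enough (xs <= y) by lra.
    apply Hlub. intros x [_ HxP]. destruct (Rle_or_lt x y) as [Hxy | Hyx]; [exact Hxy |].
    exfalso. apply HnP, HxP. lra. }
  assert (Hxs : P xs) by (apply Hclose; [lra | exact Hbelow]).
  assert (Hxs_b : xs = b).
  { destruct (Req_dec xs b) as [Heq | Hne]; [exact Heq |]. exfalso.
    destruct (Hstep xs ltac:(lra) Hxs) as [e [He Hnear]].
    set (x' := Rmin (xs + e / 2) b).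
    assert (Hx' : xs < x' <= xs + e / 2) by (unfold x'; apply Rmin_case_strong; lra).
    assert (HEx' : E x').
    { split; [split; [lra | apply Rmin_r] |].
      intros y Hy. destruct (Rtotal_order y xs) as [Hlt | [-> | Hgt]].
      - apply Hbelow; lra.
      - exact Hxs.
      - apply Hnear; lra. }
    assert (x' <= xs) by (apply Hub; exact HEx').
    lra. }
  intros x Hx. destruct (Req_dec x b) as [-> | Hne].
  - rewrite <- Hxs_b. exact Hxs.
  - apply Hbelow; lra.
Qed.

Lemma is_derive_locally (f : R -> R) (x l : R) (U : R -> Prop) :
  is_derive f x l -> open U -> U (f x) -> locally x (fun y => U (f y)).
Proof.
  intros Hf HU Hfx. apply (ex_derive_continuous f x (ex_intro _ l Hf)). exact (HU _ Hfx).
Qed.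

Lemma small_left_step (a x d : R) :
  a < x -> 0 < d -> exists h, h < 0 /\ Rabs h < d /\ a <= x + h.
Proof.
  intros Hax Hd. exists (- (Rmin d (x - a) / 2)).
  assert (0 < Rmin d (x - a) <= d /\ Rmin d (x - a) <= x - a)
    by (split; [split; [apply Rmin_pos |] | ]; try apply Rmin_l; try apply Rmin_r; lra).
  rewrite Rabs_Ropp, Rabs_pos_eq; lra.
Qed.

Lemma is_derive_first_hit (f : R -> R) (a x l K : R) :
  a < x -> is_derive f x l -> (forall y, a <= y < x -> f y < K) ->
  f x <= K /\ (f x = K -> 0 <= l).
Proof.
  intros Hax Hf Hbelow. split.
  - apply Rnot_lt_le. intros HK.
    destruct (is_derive_locally f x l _ Hf (open_gt K) HK) as [e He].
    destruct (small_left_step a x e Hax (cond_pos e)) as [h [Hh [Hhe Hah]]].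
    assert (K < f (x + h)).
    { apply He. change (Rabs (x + h - x) < e). now replace (x + h - x) with h by ring. }
    specialize (Hbelow (x + h)). lra.
  - intros HK. apply Rnot_lt_le. intros Hl.
    apply is_derive_Reals in Hf.
    destruct (Hf (- l) ltac:(lra)) as [d Hd].
    destruct (small_left_step a x d Hax (cond_pos d)) as [h [Hh [Hhd Hah]]].
    specialize (Hd h ltac:(lra) Hhd). rewrite HK in Hd.
    assert (f (x + h) < K) by (apply Hbelow; lra).
    assert (0 < (f (x + h) - K) / h) by (apply Rdiv_neg_neg; lra).
    apply Rabs_def2 in Hd. lra.
Qed.

Lemma sublevel_pair_invariant (V W dV dW : R -> R) (k l a b : R) :
  a <= b ->
  (forall u, a <= u <= b -> is_derive V u (dV u) /\ is_derive W u (dW u)) ->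
  V a < k -> W a < l ->
  (forall u, a < u <= b -> V u = k -> W u <= l -> dV u < 0) ->
  (forall u, a < u <= b -> W u = l -> V u <= k -> dW u < 0) ->
  V b < k /\ W b < l.
Proof.
  intros Hab Hder HVa HWa HV HW.
  apply (real_induction (fun u => V u < k /\ W u < l) a b); [exact Hab | | | lra].
  - intros x Hx Hbelow.
    destruct (Req_dec x a) as [-> | Hxa]; [split; assumption |].
    destruct (Hder x Hx) as [DV DW].
    destruct (is_derive_first_hit V a x (dV x) k) as [HVx HV']; [lra | exact DV | apply Hbelow |].
    destruct (is_derive_first_hit W a x (dW x) l) as [HWx HW']; [lra | exact DW | apply Hbelow |].
    split.
    + destruct HVx as [| Heq]; [assumption |].
      specialize (HV x ltac:(lra) Heq HWx). specialize (HV' Heq). lra.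
    + destruct HWx as [| Heq]; [assumption |].
      specialize (HW x ltac:(lra) Heq HVx). specialize (HW' Heq). lra.
  - intros x Hx [HVx HWx].
    destruct (Hder x ltac:(lra)) as [DV DW].
    destruct (filter_and _ _ (is_derive_locally V x _ _ DV (open_lt k) HVx)
                             (is_derive_locally W x _ _ DW (open_lt l) HWx)) as [e He].
    exists e. split; [apply cond_pos |].
    intros y Hy. apply He. change (Rabs (y - x) < e). rewrite Rabs_pos_eq; lra.
Qed.

Lemma is_lim_eventually_lt (f : R -> R) (x : Rbar) (L K : R) :
  is_lim f x L -> L < K -> Rbar_locally' x (fun y => f y < K).
Proof. intros Hf HL. exact (Hf _ (open_lt K L HL)). Qed.

Lemma is_lim_sqr (f : R -> R) (x : Rbar) (L : R) :
  is_lim f x L -> is_lim (fun y => f y ^ 2) x (L ^ 2).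
Proof.
  intros Hf. apply (is_lim_comp_continuous f (fun z => z ^ 2) x L); [exact Hf |].
  apply (ex_derive_continuous (fun z => z ^ 2)). auto_derive. exact I.
Qed.

Lemma is_derive_sqr (f : R -> R) (x d : R) :
  is_derive f x d -> is_derive (fun y => f y ^ 2) x (2 * f x * d).
Proof.
  intros Hf. replace (2 * f x * d) with (INR 2 * d * f x ^ Nat.pred 2) by (simpl; ring).
  now apply is_derive_pow.
Qed.

(* [sg] stands for (M2/alpha) s and [D] for the damping M2 s (lam m - 2 M1 s) in the
   time derivative of psi. *)
Lemma drift_lt_damping (p11 p12 m c lam v A sg D : R) :
  0 < m -> 0 < p11 -> c * p11 = 2 -> 0 <= p12 -> 320 * lam ^ 2 * m <= c ->
  p12 * A ^ 2 <= m / 8 -> 0 < sg -> v ^ 2 + sg + lam * m * v = c * m -> 54 * m * sg <= D ->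
  (m - p11 * v ^ 2 + p12 * A ^ 2) * (2 * v ^ 2 + lam * m * v) < D.
Proof.
  intros Hm Hp11 Hc Hp12 Hsmall HA Hsg Hpsi HD.
  assert (Hc0 : 0 < c) by nra.
  assert (Htilt : (lam * m) ^ 2 <= c * m / 320) by nra.
  assert (Hv : v ^ 2 <= 3 * c * m) by nra.
  (* For small [sg], v^2 is close to c m = 2 m / p11, which makes the growth rate
     m - p11 v^2 + p12 A^2 negative; for large [sg], [D] dominates. *)
  destruct (Rlt_or_le sg (c * m / 4)) as [Hsmall_sg | Hlarge_sg].
  - assert (Htv : lam * m * v <= 3 / 16 * c * m).
    { apply Rnot_lt_le. intros Hlt.
      assert ((lam * m * v) ^ 2 <= c * m / 320 * (3 * c * m)) by nra.
      nra. }
    assert (Hv' : 9 / 8 * m < p11 * v ^ 2) by nra.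
    assert (0 < 2 * v ^ 2 + lam * m * v) by nra.
    nra.
  - assert (Hdamp : 27 / 2 * c * m * m <= D) by nra.
    destruct (Rle_or_lt 0 (2 * v ^ 2 + lam * m * v)) as [HX | HX].
    + assert (0 <= p11 * v ^ 2) by (apply Rmult_le_pos; [lra | apply pow2_ge_0]).
      assert (m - p11 * v ^ 2 + p12 * A ^ 2 <= 9 / 8 * m) by lra.
      nra.
    + assert (- ((lam * m) ^ 2) / 8 <= 2 * v ^ 2 + lam * m * v)
        by (assert (0 <= (2 * v + lam * m / 2) ^ 2) by apply pow2_ge_0; nra).
      assert (0 <= p12 * A ^ 2) by (apply Rmult_le_pos; [lra | apply pow2_ge_0]).
      assert (p11 * v ^ 2 <= 6 * m) by nra.
      nra.
Qed.

Lemma A_sq_rate_neg (mu2 M3 p21 p22 m eta Cs v A s : R) :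
  0 < mu2 -> 0 <= p21 -> 0 < m -> 0 <= s <= Cs * m -> A ^ 2 = eta * m ->
  4 * p22 * eta * m <= mu2 -> 2 * M3 ^ 2 * Cs ^ 2 * m < eta * mu2 ^ 2 ->
  2 * A * rhs_A mu2 p21 p22 M3 v A s < 0.
Proof.
  intros Hmu2 Hp21 Hm Hs HA Hp22 HM3.
  unfold rhs_A.
  assert (Hforcing : mu2 * (2 * M3 * A * s) <= mu2 ^ 2 / 2 * A ^ 2 + 2 * M3 ^ 2 * s ^ 2)
    by (assert (0 <= (mu2 * A / 2 - M3 * s) ^ 2) by apply pow2_ge_0; nra).
  assert (Hs2 : s ^ 2 <= (Cs * m) ^ 2) by (apply pow_incr; lra).
  assert (Hcross : 2 * M3 * A * s < 3 / 2 * mu2 * (eta * m)).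
  { apply (Rmult_lt_reg_l mu2); [exact Hmu2 |].
    assert (M3 ^ 2 * s ^ 2 <= M3 ^ 2 * (Cs * m) ^ 2)
      by (apply Rmult_le_compat_l; [apply pow2_ge_0 | exact Hs2]).
    rewrite HA in Hforcing. nra. }
  assert (Hconf : p22 * A ^ 2 <= mu2 / 4) by (rewrite HA; lra).
  assert (0 <= p21 * v ^ 2) by (apply Rmult_le_pos; [lra | apply pow2_ge_0]).
  assert (0 <= A ^ 2) by apply pow2_ge_0.
  replace (2 * A * ((- mu2 - p21 * v ^ 2 + p22 * A ^ 2) * A + M3 * s))
    with (2 * A ^ 2 * (- mu2 - p21 * v ^ 2 + p22 * A ^ 2) + 2 * M3 * A * s) by ring.
  nra.
Qed.

Section TrappingRegion.

Variables alpha M1 M2 M3 p11 p12 p21 p22 mu2 : R.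
Hypotheses (Halpha : 0 < alpha) (HM2 : 0 < M2) (HM3 : 0 < M3)
  (Hp11 : 0 < p11) (Hp12 : 0 < p12) (Hp21 : 0 < p21) (Hp22 : 0 < p22) (Hmu2 : 0 < mu2).

Definition psi_level : R := 2 / p11.
Definition s_slope : R := 5 * alpha * psi_level / (4 * M2).
Definition tilt : R := 4 * Rabs M1 * s_slope + 108 / alpha.
Definition A_level : R := 1 / (8 * p12).
Definition mu1_threshold : R :=
  Rmin (psi_level / (320 * tilt ^ 2))
    (Rmin (mu2 / (4 * p22 * A_level)) (A_level * mu2 ^ 2 / (2 * M3 ^ 2 * s_slope ^ 2))).

Lemma psi_level_mul : psi_level * p11 = 2.
Proof. unfold psi_level. field. lra. Qed.

Lemma psi_level_pos : 0 < psi_level.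
Proof. unfold psi_level. apply Rdiv_lt_0_compat; lra. Qed.

Lemma s_slope_pos : 0 < s_slope.
Proof. unfold s_slope. generalize psi_level_pos. intros. apply Rdiv_lt_0_compat; nra. Qed.

Lemma tilt_ge_M1 : 4 * Rabs M1 * s_slope <= tilt.
Proof.
  unfold tilt. assert (0 < 108 / alpha) by (apply Rdiv_lt_0_compat; lra). lra.
Qed.

Lemma tilt_mul_alpha : 108 <= tilt * alpha.
Proof.
  unfold tilt. rewrite Rmult_plus_distr_r.
  assert (0 <= 4 * Rabs M1 * s_slope * alpha)
    by (generalize (Rabs_pos M1) s_slope_pos; intros; apply Rmult_le_pos; nra).
  assert (108 / alpha * alpha = 108) by (field; lra). lra.
Qed.

Lemma tilt_pos : 0 < tilt.
Proof. generalize tilt_mul_alpha. intros. nra. Qed.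

Lemma A_level_mul : A_level * (8 * p12) = 1.
Proof. unfold A_level. field. lra. Qed.

Lemma A_level_pos : 0 < A_level.
Proof. unfold A_level. apply Rdiv_lt_0_compat; lra. Qed.

Lemma mu1_threshold_pos : 0 < mu1_threshold.
Proof.
  generalize psi_level_pos s_slope_pos tilt_pos A_level_pos. intros.
  assert (0 < tilt ^ 2) by (apply pow_lt; lra).
  assert (0 < mu2 ^ 2) by (apply pow_lt; lra).
  assert (0 < M3 ^ 2 * s_slope ^ 2) by (apply Rmult_lt_0_compat; apply pow_lt; lra).
  unfold mu1_threshold. repeat apply Rmin_pos; apply Rdiv_lt_0_compat; nra.
Qed.

Variable m : R.
Hypotheses (Hm : 0 < m) (Hm_small : m < mu1_threshold).

Lemma m_lt_thresholds :
  m < psi_level / (320 * tilt ^ 2) /\ m < mu2 / (4 * p22 * A_level) /\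
  m < A_level * mu2 ^ 2 / (2 * M3 ^ 2 * s_slope ^ 2).
Proof.
  destruct (proj1 (Rmin_Rgt _ _ _) Hm_small) as [H1 H23].
  destruct (proj1 (Rmin_Rgt _ _ _) H23) as [H2 H3].
  auto.
Qed.

Lemma tilt_small : 320 * tilt ^ 2 * m <= psi_level.
Proof.
  destruct m_lt_thresholds as [H _]. generalize tilt_pos. intros.
  apply Rlt_div_r in H; nra.
Qed.

Lemma A_level_small : 4 * p22 * A_level * m <= mu2.
Proof.
  destruct m_lt_thresholds as [_ [H _]]. generalize A_level_pos. intros.
  apply Rlt_div_r in H; nra.
Qed.

Lemma forcing_small : 2 * M3 ^ 2 * s_slope ^ 2 * m < A_level * mu2 ^ 2.
Proof.
  destruct m_lt_thresholds as [_ [_ H]].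
  assert (0 < M3 ^ 2 * s_slope ^ 2)
    by (generalize s_slope_pos; intros; apply Rmult_lt_0_compat; apply pow_lt; lra).
  apply Rlt_div_r in H; nra.
Qed.

Definition psi (v s : R) : R := v ^ 2 + M2 / alpha * s + tilt * m * v.

Definition psi_rate (v A s : R) : R :=
  (2 * v + tilt * m) * rhs_v (- m) p11 p12 M2 v A s + M2 / alpha * rhs_s alpha M1 v s.

Lemma s_le_of_psi_le (v s : R) : psi v s <= psi_level * m -> s <= s_slope * m.
Proof.
  unfold psi. intros Hpsi.
  generalize tilt_small psi_level_pos. intros.
  assert (Hsg : M2 / alpha * s <= 5 / 4 * psi_level * m).
  { assert (0 <= (v + tilt * m / 2) ^ 2) by apply pow2_ge_0. nra. }
  assert (Hslope : M2 / alpha * (s_slope * m) = 5 / 4 * psi_level * m)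
    by (unfold s_slope; field; lra).
  assert (0 < M2 / alpha) by (apply Rdiv_lt_0_compat; lra).
  apply (Rmult_le_reg_l (M2 / alpha)); lra.
Qed.

Lemma psi_rate_neg (v A s : R) :
  0 < s -> A ^ 2 <= A_level * m -> psi v s = psi_level * m -> psi_rate v A s < 0.
Proof.
  intros Hs HA Hpsi.
  assert (Hs_le : s <= s_slope * m) by (apply (s_le_of_psi_le v); lra).
  assert (Hdamp : tilt * m / 2 <= tilt * m - 2 * M1 * s).
  { generalize tilt_ge_M1 (Rle_abs M1) (Rabs_pos M1). intros. nra. }
  assert (HD : 54 * m * (M2 / alpha * s) <= M2 * s * (tilt * m - 2 * M1 * s)).
  { assert (0 < M2 / alpha * s) by (apply Rmult_lt_0_compat; [apply Rdiv_lt_0_compat |]; lra).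
    assert (M2 * s * (tilt * m / 2) <= M2 * s * (tilt * m - 2 * M1 * s))
      by (apply Rmult_le_compat_l; [apply Rmult_le_pos; lra | exact Hdamp]).
    assert (M2 * s * (tilt * m / 2) = M2 / alpha * s * m * (tilt * alpha) / 2)
      by (field; lra).
    assert (0 < M2 / alpha * s * m) by (apply Rmult_lt_0_compat; lra).
    generalize tilt_mul_alpha. intros. nra. }
  assert (Hrate : psi_rate v A s + M2 * s * (tilt * m - 2 * M1 * s)
    = (m - p11 * v ^ 2 + p12 * A ^ 2) * (2 * v ^ 2 + tilt * m * v))
    by (unfold psi_rate, rhs_v, rhs_s; field; lra).
  assert (HpA : p12 * A ^ 2 <= m / 8) by (generalize A_level_mul; intros; nra).
  assert (0 < M2 / alpha * s) by (apply Rmult_lt_0_compat; [apply Rdiv_lt_0_compat |]; lra).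
  enough ((m - p11 * v ^ 2 + p12 * A ^ 2) * (2 * v ^ 2 + tilt * m * v)
    < M2 * s * (tilt * m - 2 * M1 * s)) by lra.
  apply (drift_lt_damping p11 p12 m psi_level tilt v A (M2 / alpha * s));
    auto using psi_level_mul, tilt_small; lra.
Qed.

Lemma psi_equilibrium_lt : psi (v_ep2 (- m) p11) 0 < psi_level * m.
Proof.
  assert (Hve2 : v_ep2 (- m) p11 ^ 2 = m / p11)
    by (unfold v_ep2; rewrite Ropp_involutive; apply pow2_sqrt, Rdiv_le_0_compat; lra).
  assert (Hve0 : 0 <= v_ep2 (- m) p11) by apply sqrt_pos.
  set (ve := v_ep2 (- m) p11) in *.
  assert (Hve : ve ^ 2 * p11 = m) by (rewrite Hve2; field; lra).
  generalize tilt_small psi_level_mul tilt_pos. intros.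
  assert (Htilt_ve : (tilt * ve * p11) ^ 2 < 1).
  { replace ((tilt * ve * p11) ^ 2) with (tilt ^ 2 * m * p11) by (rewrite <- Hve; ring). nra. }
  assert (tilt * ve * p11 < 1) by nra.
  unfold psi. rewrite Rmult_0_r, Rplus_0_r.
  apply (Rmult_lt_reg_r p11); [lra |].
  nra.
Qed.

Lemma is_derive_psi (v s : R -> R) (t dv ds : R) :
  is_derive v t dv -> is_derive s t ds ->
  is_derive (fun u => psi (v u) (s u)) t ((2 * v t + tilt * m) * dv + M2 / alpha * ds).
Proof.
  intros Hv Hs. unfold psi.
  replace ((2 * v t + tilt * m) * dv + M2 / alpha * ds)
    with (2 * v t * dv + M2 / alpha * ds + tilt * m * dv) by ring.
  apply (is_derive_plus (fun u => v u ^ 2 + M2 / alpha * s u) (fun u => tilt * m * v u)).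
  - apply (is_derive_plus (fun u => v u ^ 2) (fun u => M2 / alpha * s u)).
    + now apply is_derive_sqr.
    + now apply is_derive_scal.
  - now apply is_derive_scal.
Qed.

Lemma is_lim_psi (v s : R -> R) (x : Rbar) (lv ls : R) :
  is_lim v x lv -> is_lim s x ls -> is_lim (fun u => psi (v u) (s u)) x (psi lv ls).
Proof.
  intros Hv Hs. unfold psi.
  apply (is_lim_plus _ _ x (lv ^ 2 + M2 / alpha * ls) (tilt * m * lv)); [| | reflexivity].
  - apply (is_lim_plus _ _ x (lv ^ 2) (M2 / alpha * ls)); [| | reflexivity].
    + now apply is_lim_sqr.
    + now apply (is_lim_scal_l s (M2 / alpha) x ls).
  - now apply (is_lim_scal_l v (tilt * m) x lv).
Qed.

Lemma unstable_branch_s_le (T : Rbar) (v A s : R -> R) :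
  unstable_branch_solution alpha M1 M2 M3 p11 p12 p21 p22 (- m) mu2 T v A s ->
  forall t : R, Rbar_lt t T -> s t <= s_slope * m.
Proof.
  intros [Hder [Hv [HA [Hs Hpos]]]] t Ht.
  assert (Hinside : Rbar_locally' m_infty
    (fun u => psi (v u) (s u) < psi_level * m /\ A u ^ 2 < A_level * m)).
  { apply filter_and.
    - exact (is_lim_eventually_lt _ _ _ _ (is_lim_psi v s _ _ _ Hv Hs) psi_equilibrium_lt).
    - apply (is_lim_eventually_lt _ _ (0 ^ 2)); [now apply is_lim_sqr |].
      generalize A_level_pos. intros. nra. }
  destruct Hinside as [M HM].
  set (a := Rmin M t - 1).
  assert (Ha : a < M /\ a <= t) by (unfold a; generalize (Rmin_l M t) (Rmin_r M t); lra).
  assert (HT : forall u, u <= t -> Rbar_lt u T)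
    by (intros u Hu; destruct T as [T' | |]; simpl in Ht |- *; [lra | exact I | contradiction]).
  destruct (sublevel_pair_invariant (fun u => psi (v u) (s u)) (fun u => A u ^ 2)
    (fun u => psi_rate (v u) (A u) (s u))
    (fun u => 2 * A u * rhs_A mu2 p21 p22 M3 (v u) (A u) (s u))
    (psi_level * m) (A_level * m) a t) as [Hpsi _].
  - lra.
  - intros u Hu. destruct (Hder u (HT u ltac:(lra))) as [Dv [DA Ds]].
    split; [exact (is_derive_psi v s u _ _ Dv Ds) | exact (is_derive_sqr A u _ DA)].
  - apply HM. lra.
  - apply HM. lra.
  - intros u Hu Hpsi_u HA_u. apply psi_rate_neg; [apply Hpos, HT | |]; lra.
  - intros u Hu HA_u Hpsi_u.
    assert (0 < s u) by (apply Hpos, HT; lra).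
    apply (A_sq_rate_neg mu2 M3 p21 p22 m A_level s_slope);
      [lra | lra | lra | split; [lra | now apply (s_le_of_psi_le (v u))] | exact HA_u
      | exact A_level_small | exact forcing_small].
  - exact (s_le_of_psi_le _ _ (Rlt_le _ _ Hpsi)).
Qed.

End TrappingRegion.

Theorem lemma3
  (alpha M1 M2 M3 p11 p12 p21 p22 mu2 : R)
  (Halpha : 0 < alpha) (HM2 : 0 < M2) (HM3 : 0 < M3)
  (Hp11 : 0 < p11) (Hp12 : 0 < p12) (Hp21 : 0 < p21) (Hp22 : 0 < p22)
  (Hp : p12 * p21 < p11 * p22)
  (Hmu2 : 0 < mu2) :
  exists C delta : R, 0 < C /\ 0 < delta /\
    forall mu1 : R, - delta < mu1 -> mu1 < 0 ->
    forall (T : Rbar) (v A s : R -> R),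
      unstable_branch_solution alpha M1 M2 M3 p11 p12 p21 p22 mu1 mu2 T v A s ->
      forall t : R, 0 < t -> Rbar_lt t T -> Rabs (s t) <= C * Rabs mu1.
Proof.
  exists (s_slope alpha M2 p11), (mu1_threshold alpha M1 M2 M3 p11 p12 p22 mu2).
  split; [now apply s_slope_pos |].
  split; [now apply mu1_threshold_pos |].
  intros mu1 Hlow Hneg T v A s Hsol t _ HtT.
  assert (Hpos : 0 < s t) by (apply Hsol, HtT).
  rewrite <- (Ropp_involutive mu1) in Hsol.
  assert (Hbound : s t <= s_slope alpha M2 p11 * - mu1).
  { apply (unstable_branch_s_le alpha M1 M2 M3 p11 p12 p21 p22 mu2) with T v A;
      try assumption; lra. }
  rewrite Rabs_pos_eq, Rabs_left; lra.
Qed.
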